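(* For every network $\mathcal N$ with character $D^*$, the rate region $\mathcal R^{\mathcal N}$ equals the closure of $\bigcup_{T=1}^{\infty}\frac{T}{T+D^*}\,\widetilde{\mathcal R}^{\mathcal N^T}$.
   Context: A network is a triple $\mathcal N=(\mathcal L,\mathcal I,D_{\mathcal L})$ where $\mathcal L$ is a finite nonempty set (of links); $\mathcal I=(\mathcal I(l))_{l\in\mathcal L}$ is the collision profile, each $\mathcal I(l)$ being a collection of nonempty subsets of $\mathcal L$; and $D_{\mathcal L}$ assigns an integer $D_{\mathcal L}(l,l')$ to every pair $(l,l')$ with $l'\in\phi$ for some $\phi\in\mathcal I(l)$. The character is $D^*=\max_{l\in\mathcal L}\max_{\phi\in\mathcal I(l)}\max_{l'\in\phi}|D_{\mathcal L}(l,l')|$ (0 if there are no collision sets). A schedule is a map $S:\mathcal L\times\mathbb Z\to\{0,1\}$; $S(l,t)$ has a collision if there exists $\phi\in\mathcal I(l)$ with $S(l',t+D_{\mathcal L}(l,l'))=1$ for all $l'\in\phi$, otherwise it is collision free. $R_S(l)=\lim_{T\to\infty}\frac1T\sum_{t=0}^{T-1}\iota\big(S(l,t)=1\text{ and collision free}\big)$ when the limit exists; $R_S=(R_S(l))_l$ is the rate vector when all limits exist. A nonnegative vector $R\in[0,\infty)^{\mathcal L}$ is achievable if for every $\epsilon>0$ some schedule $S$ has a rate vector with $R_S(l)\ge R(l)-\epsilon$ for all $l$; $\mathcal R^{\mathcal N}$ is the set of achievable nonnegative vectors. For an integer $T\ge1$, an independent set of $\mathcal N^T$ is a binary $|\mathcal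 L|\times T$ matrix $A$ (columns indexed $0,\dots,T-1$) such that there is no $(l,t)$ and $\phi\in\mathcal I(l)$ with $A(l,t)=1$ and, for every $l'\in\phi$, $0\le t+D_{\mathcal L}(l,l')\le T-1$ and $A(l',t+D_{\mathcal L}(l,l'))=1$. Its rate vector is $\frac1T A\mathbf 1$ (the sum of the columns divided by $T$). $\widetilde{\mathcal R}^{\mathcal N^T}$ is the convex hull of the rate vectors of all independent sets of $\mathcal N^T$. *)

From HB Require Import structures.
From mathcomp Require Import all_boot all_order all_algebra.
From mathcomp Require Import all_classical all_reals all_analysis.
Set Implicit Arguments. Unset Strict Implicit. Unset Printing Implicit Defensive.
Import Order.TTheory GRing.Theory Num.Theory.
Import numFieldTopology.Exports numFieldNormedType.Exports.
Local Open Scope ring_scope.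
Local Open Scope classical_set_scope.

(* A network is given by: a finite type of links [L] (nonempty, required as a
   hypothesis of the theorem), a collision profile [I : L -> {set {set L}}]
   (each collision set nonempty, also a hypothesis), and delays
   [D : L -> L -> int] (only the values D l l' with l' in some phi in I l matter). *)

Section Network.
Variables (L : finType) (I : L -> {set {set L}}) (D : L -> L -> int).

Definition character : nat :=
  \max_(l : L) \max_(phi in I l) \max_(l' in phi) absz (D l l').

Definition schedule := L -> int -> bool.

Definition has_collision (S : schedule) (l : L) (t : int) : bool :=
  [exists phi in I l, [forall l' in phi, S l' (t + D l l')]].

Definition success (S : schedule) (l : L) (t : int) : bool :=
  S l t && ~~ has_collision S l t.

Variable R : realType.

Definition partial_rate (S : schedule) (l : L) (T : nat) : R :=
  (\sum_(t < T) (success S l (t%:Z) : nat)%:R) / T%:R.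

Definition is_rate_vector (S : schedule) (r : L -> R) : Prop :=
  forall l, partial_rate S l @ \oo --> r l.

Definition achievable (x : L -> R) : Prop :=
  forall eps : R, 0 < eps -> exists S : schedule, exists r : L -> R,
    is_rate_vector S r /\ forall l, x l - eps <= r l.

Definition rate_region : set (L -> R) :=
  [set x | (forall l, 0 <= x l) /\ achievable x].

(* binary |L| x T matrices, and reading entry (l, s) at an integer time s
   (false when s is outside [0, T-1]) *)
Definition bmatrix (T : nat) := {ffun L * 'I_T -> bool}.

Definition entry_at (T : nat) (A : bmatrix T) (l : L) (s : int) : bool :=
  [exists t : 'I_T, (s == (nat_of_ord t)%:Z) && A (l, t)].

Definition independent (T : nat) (A : bmatrix T) : bool :=
  ~~ [exists l : L, exists t : 'I_T, exists phi in I l,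
        A (l, t) && [forall l' in phi, entry_at A l' ((nat_of_ord t)%:Z + D l l')]].

Definition mrate (T : nat) (A : bmatrix T) : L -> R :=
  fun l => (\sum_(t < T) (A (l, t) : nat))%:R / T%:R.

Definition conv_rates (T : nat) : set (L -> R) :=
  [set x | exists w : bmatrix T -> R,
     (forall A, 0 <= w A) /\ (forall A, ~~ independent A -> w A = 0) /\
     \sum_(A : bmatrix T) w A = 1 /\
     forall l, x l = \sum_(A : bmatrix T) w A * mrate A l].

Definition scaled_conv_rates (T : nat) : set (L -> R) :=
  [set (T%:R / (T + character)%:R) *: x | x in conv_rates T].

End Network.

From HB Require Import structures.
From mathcomp Require Import all_boot all_order all_algebra.
From mathcomp Require Import all_classical all_reals all_analysis.
From mathcomp Require Import zify ring lra.
Import Order.TTheory GRing.Theory Num.Theory.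
Import numFieldTopology.Exports numFieldNormedType.Exports.
Local Open Scope ring_scope.
Local Open Scope classical_set_scope.
Set Implicit Arguments. Unset Strict Implicit. Unset Printing Implicit Defensive.

(* Cut time into blocks of length [T + D^*], play an independent
   set of [N^T] in the first [T] slots of each block and stay silent in the
   last [D^*] ones.  As no delay exceeds [D^*], these guard intervals isolate
   the blocks, so every transmission succeeds.  Playing each independent set
   [A] in about [N * w A] blocks out of [N] gives a periodic schedule whose
   rate is within [|N^T| / N] of [T/(T + D^* ) * sum_A w A * rate A].

   Given an achievable [x], run a schedule with rates close to
   [x] for [T] slots; its successful transmissions form an independent set of
   [N^T].  Keeping only [floor (x l (T + D^* ))] of them on each link [l]
   yields a point of the scaled hull within [eps] of [x] when [T] is large. *)

Section PointwiseClosure.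
Variables (R : realType) (L : finType).

Lemma ptws_cvgP (F : set_system {ptws L -> R}) (f : {ptws L -> R}) :
  Filter F -> (forall l, (fun g : L -> R => g l) @ F --> f l) -> F --> f.
Proof.
move=> FF Fl; apply/cvg_sup => l.
have proj_onto : range (fun g : {ptws L -> R} => g l) = [set: R].
  by rewrite eqEsubset; split => // y _; exists (fun=> y).
apply/cvg_image => // B /Fl FB.
by exists ((fun g : {ptws L -> R} => g l) @^-1` B) => //; rewrite image_preimage.
Qed.

(* Since [L] is finite, the uniform boxes around [x] are neighbourhoods. *)
Lemma nbhs_ptws_box (x : {ptws L -> R}) (eps : R) : 0 < eps ->
  nbhs x [set y : {ptws L -> R} | forall l, `|x l - y l| < eps].
Proof.
move=> eps_gt0.
apply: (@filter_forall _ L (fun l (y : {ptws L -> R}) => `|x l - y l| < eps)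
  (nbhs x) (nbhs_filter x)) => l.
apply: (@proj_continuous L (fun=> R) l x (ball (x l) eps)).
exact: nbhsx_ballx.
Qed.

Lemma closure_ptwsP (U : set {ptws L -> R}) (x : {ptws L -> R}) :
  closure U x <->
  forall eps : R, 0 < eps -> exists y, U y /\ forall l, `|x l - y l| < eps.
Proof.
split=> [clx eps eps_gt0|approx].
  by have [y [Uy xy]] := clx _ (nbhs_ptws_box x eps_gt0); exists y.
have /choice [y Hy] : forall n : nat,
    exists y, U y /\ forall l, `|x l - y l| < n.+1%:R^-1.
  by move=> n; apply: approx.
rewrite closureEcvg; exists (y @ \oo); first exact: fmap_proper_filter.
split; last by move=> A /= yA; exists 0%N => // n _; apply: yA; exact: (Hy n).1.
apply: ptws_cvgP => l; apply/cvgrPdist_lt => e e_gt0.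
apply: filterS (near_infty_natSinv_lt (PosNum e_gt0)) => n /= ltne.
exact: lt_trans ((Hy n).2 l) ltne.
Qed.

End PointwiseClosure.

Section PeriodicAverage.
Variables (f : nat -> nat) (P : nat).
Hypotheses (f_le1 : forall n, (f n <= 1)%N) (f_per : forall n, f (n + P)%N = f n).

Lemma sum_le1 n : (\sum_(t < n) f t <= n)%N.
Proof.
apply: leq_trans (_ : \sum_(t < n) 1 <= n)%N; first exact: leq_sum.
by rewrite sum_nat_const card_ord muln1.
Qed.

Lemma periodic_sum q r :
  (\sum_(t < q * P + r) f t = q * \sum_(t < P) f t + \sum_(t < r) f t)%N.
Proof.
elim: q => [|q IH]; first by rewrite !mul0n add0n.
rewrite mulSn -addnA big_split_ord /= -[in RHS]addnA -IH; congr (_ + _)%N.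
by apply: eq_bigr => t _; rewrite addnC f_per.
Qed.

Lemma periodic_average_err (R : realType) n : (0 < P)%N -> (0 < n)%N ->
  `|(\sum_(t < P) f t)%:R / P%:R - (\sum_(t < n) f t)%:R / n%:R| <= P%:R / n%:R :> R.
Proof.
move=> P_gt0 n_gt0.
have := periodic_sum (n %/ P) (n %% P); rewrite -divn_eq => ->.
have rP : (n %% P <= P)%N by rewrite ltnW ?ltn_mod.
have := sum_le1 (n %% P); have := sum_le1 P.
move: (n %/ P)%N (n %% P)%N rP (divn_eq n P) => q r rP n_eq.
set C := (\sum_(t < P) f t)%N; set e := (\sum_(t < r) f t)%N => CP er.
have PR : (0 : R) < P%:R by rewrite ltr0n.
have nR : (0 : R) < n%:R by rewrite ltr0n.
have nE : (n%:R : R) = q%:R * P%:R + r%:R by rewrite n_eq natrD natrM.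
have -> : C%:R / P%:R - (q * C + e)%:R / n%:R =
          (C%:R * r%:R - e%:R * P%:R) / (P%:R * n%:R) :> R.
  by rewrite natrD natrM nE; field; rewrite -nE !gt_eqF.
rewrite normrM [X in _ * X]gtr0_norm ?invr_gt0 ?mulr_gt0 //.
rewrite ler_pdivrMr ?mulr_gt0 //.
have -> : P%:R / n%:R * (P%:R * n%:R) = P%:R * P%:R :> R by field; rewrite gt_eqF.
rewrite ler_norml.
have CR : (C%:R : R) <= P%:R by rewrite ler_nat.
have eR : (e%:R : R) <= P%:R by rewrite ler_nat (leq_trans er).
have : C%:R * r%:R <= P%:R * P%:R :> R by rewrite ler_pM ?ler_nat.
have : e%:R * P%:R <= P%:R * P%:R :> R by rewrite ler_pM2r.
have : (0 : R) <= C%:R * r%:R by rewrite mulr_ge0.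
have : (0 : R) <= e%:R * P%:R by rewrite mulr_ge0.
move=> *; apply/andP; split; lra.
Qed.

Lemma periodic_cvg (R : realType) : (0 < P)%N ->
  (fun n => (\sum_(t < n) f t)%:R / n%:R : R) @ \oo -->
    ((\sum_(t < P) f t)%:R / P%:R : R).
Proof.
move=> P_gt0; apply/cvgrPdist_le => eps eps_gt0.
apply: filterS (nbhs_infty_gtr (P%:R / eps)) => n /= ltPn.
have n_gt0 : (0 < n)%N.
  by rewrite -(ltr_nat R); apply: le_lt_trans ltPn; rewrite divr_ge0 // ltW.
apply: le_trans (periodic_average_err R P_gt0 n_gt0) _.
by rewrite ler_pdivrMr ?ltr0n // mulrC -ler_pdivrMr // ltW.
Qed.

End PeriodicAverage.

Lemma divmodz_small (q r g : int) : 0 <= r < g ->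
  ((q * g + r) %/ g)%Z = q /\ ((q * g + r) %% g)%Z = r.
Proof.
move=> /andP [r_ge0 r_lt_g]; have g_gt0 : 0 < g by apply: le_lt_trans r_lt_g.
have g_neq0 : g != 0 by rewrite gt_eqF.
have r_small : 0 <= r < `|g| by rewrite gtr0_norm // r_ge0.
split; last by rewrite modzMDl modz_small // r_ge0.
by rewrite divzMDl // divz_small ?addr0.
Qed.

Section Network.
Variables (L : finType) (I : L -> {set {set L}}) (D : L -> L -> int).
Local Notation Dc := (character I D).

Lemma delay_le_character l phi l' :
  phi \in I l -> l' \in phi -> (absz (D l l') <= Dc)%N.
Proof.
move=> phi_in l'_in; rewrite /character.
apply: leq_trans (leq_bigmax l); apply: leq_trans (leq_bigmax_cond _ phi_in).
exact: leq_bigmax_cond.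
Qed.

Definition rowcount T (A : bmatrix L T) (l : L) : nat :=
  (\sum_(t < T) (A (l, t) : nat))%N.

Lemma rowcount_le T (A : bmatrix L T) l : (rowcount A l <= T)%N.
Proof.
apply: leq_trans (_ : \sum_(t < T) 1 <= T)%N; first by apply: leq_sum => t _; exact: leq_b1.
by rewrite sum_nat_const card_ord muln1.
Qed.

Lemma entry_atP T (A : bmatrix L T) l (s : int) :
  entry_at A l s -> exists2 t : 'I_T, s = (t : nat)%:Z & A (l, t).
Proof. by move=> /existsP [t /andP [/eqP -> At]]; exists t. Qed.

Lemma entry_at_ge T (A : bmatrix L T) l (s : int) :
  T%:Z <= s -> entry_at A l s = false.
Proof.
move=> Ts; apply/negbTE/negP => /entry_atP [t s_eq _].
by move: Ts; rewrite s_eq lez_nat leqNgt ltn_ord.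
Qed.

Lemma entry_at_ord T (A : bmatrix L T) l (t : 'I_T) :
  entry_at A l (t : nat)%:Z = A (l, t).
Proof.
apply/idP/idP => [/entry_atP [t' /eqP]|At]; last by apply/existsP; exists t; rewrite eqxx.
by rewrite eqz_nat => /eqP /val_inj ->.
Qed.

Lemma rowcount_entry_at T (A : bmatrix L T) l n : (T <= n)%N ->
  (\sum_(o < n) (entry_at A l o%:Z : nat))%N = rowcount A l.
Proof.
move=> Tn; rewrite -(big_mkord xpredT (fun o => (entry_at A l o%:Z : nat))).
rewrite (big_cat_nat _ (n := T)) //= [X in (_ + X)%N]big1_seq ?addn0; last first.
  by move=> o /andP [_]; rewrite mem_index_iota => /andP [To _]; rewrite entry_at_ge.
by rewrite big_mkord; apply: eq_bigr => t _; rewrite entry_at_ord.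
Qed.

(* The all-zero matrix; it is independent and pads cyclic schedules. *)
Definition empty_set T : bmatrix L T := [ffun _ => false].

Lemma empty_set_independent T : independent I D (empty_set T).
Proof.
apply/negP => /existsP [l /existsP [t /existsP [phi /andP [_ /andP [+ _]]]]].
by rewrite ffunE.
Qed.

Lemma rowcount_empty_set T l : rowcount (empty_set T) l = 0%N.
Proof. by rewrite /rowcount big1 // => t _; rewrite ffunE. Qed.

(* The block schedule of a sequence [M] of matrices cuts time into blocks of
   length [T + D^*]: block [q] plays [M q] during its first [T] slots and is
   silent during the last [D^*] slots, which act as guard intervals. *)
Definition block_schedule T (M : int -> bmatrix L T) : schedule L :=
  fun l t => entry_at (M (t %/ (T + Dc)%N%:Z)%Z) l (t %% (T + Dc)%N%:Z)%Z.

Section BlockSchedule.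
Variables (T : nat) (M : int -> bmatrix L T).
Local Notation g := (T + Dc)%N.
Local Notation S := (block_schedule M).

Lemma block_schedule_at l (q o : int) : 0 <= o < g%:Z ->
  S l (q * g%:Z + o) = entry_at (M q) l o.
Proof. by move=> /divmodz_small -/(_ q) [qE oE]; rewrite /block_schedule qE oE. Qed.

(* Thanks to the guard intervals, a transmission at distance at most [D^*] of
   the active part of block [q] belongs to [M q]. *)
Lemma block_schedule_near l (q : int) (t : 'I_T) (d : int) : (absz d <= Dc)%N ->
  S l (q * g%:Z + (t : nat)%:Z + d) -> entry_at (M q) l ((t : nat)%:Z + d).
Proof.
have tT := ltn_ord t; move=> dDc.
have [d_ge|d_lt] := leP 0 ((t : nat)%:Z + d).
  by rewrite -addrA block_schedule_at // d_ge /=; lia.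
have -> : q * g%:Z + (t : nat)%:Z + d = (q - 1) * g%:Z + (g%:Z + (t : nat)%:Z + d).
  by ring.
rewrite block_schedule_at; last lia.
by rewrite [X in is_true X -> _]entry_at_ge //; lia.
Qed.

Lemma block_success : (forall q, independent I D (M q)) ->
  forall l t, success I D S l t = S l t.
Proof.
move=> indM l t; rewrite /success; case St: (S l t) => //=.
have [k kE Mk] := entry_atP St.
have tE : t = (t %/ g%:Z)%Z * g%:Z + (k : nat)%:Z by rewrite -kE -divz_eq.
apply/negP => /existsP [phi /andP [phi_in /forallP coll]].
move: (indM (t %/ g%:Z)%Z) => /negP; apply.
apply/existsP; exists l; apply/existsP; exists k; apply/existsP; exists phi.
rewrite phi_in Mk /=; apply/forallP => l'; apply/implyP => l'_in.
apply: block_schedule_near; first exact: delay_le_character l'_in.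
by rewrite -tE; move: (coll l'); rewrite l'_in.
Qed.

Lemma block_count l N :
  (\sum_(t < N * g) (S l t%:Z : nat))%N = (\sum_(b < N) rowcount (M b%:Z) l)%N.
Proof.
rewrite -(big_mkord xpredT (fun t => (S l t%:Z : nat))).
rewrite -(big_mkord xpredT (fun b => rowcount (M b%:Z) l)).
elim: N => [|N IH]; first by rewrite mul0n !big_geq.
rewrite big_nat_recr //= -IH mulSn addnC (big_cat_nat _ (n := N * g)) //=; last by lia.
congr (_ + _)%N; rewrite -(rowcount_entry_at _ _ (leq_addr Dc T)).
rewrite -(big_mkord xpredT (fun o => (entry_at (M N%:Z) l o%:Z : nat))).
rewrite -{1}[(N * g)%N]add0n big_addn addKn.
apply: eq_big_nat => o /andP [_ og].
by rewrite addnC PoszD PoszM block_schedule_at // lez_nat ltz_nat og.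
Qed.

End BlockSchedule.

Definition cyclic_schedule T (s : seq (bmatrix L T)) : schedule L :=
  block_schedule (fun q => nth (empty_set T) s (absz (q %% (size s)%:Z)%Z)).

Lemma cyclic_schedule_period T (s : seq (bmatrix L T)) l n :
  cyclic_schedule s l ((n + size s * (T + Dc))%N)%:Z = cyclic_schedule s l n%:Z.
Proof.
have [->|g_neq0] := eqVneq (T + Dc)%N 0%N; first by rewrite muln0 addn0.
rewrite /cyclic_schedule /block_schedule addnC PoszD PoszM.
by rewrite divzMDl // modzMDl modzDl.
Qed.

Lemma cyclic_schedule_rate (R : realType) T (s : seq (bmatrix L T)) :
  (0 < T)%N -> (0 < size s)%N -> all (@independent L I D T) s ->
  is_rate_vector I D (cyclic_schedule s)
    (fun l => (\sum_(A <- s) rowcount A l)%:R / (size s * (T + Dc))%:R : R).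
Proof.
move=> T_gt0 s_gt0 /allP s_ind l.
have ind q : independent I D (nth (empty_set T) s (absz (q %% (size s)%:Z)%Z)).
  have s_neq0 : (size s)%:Z != 0 by rewrite eqz_nat -lt0n.
  by apply: s_ind; rewrite mem_nth // -ltz_nat gez0_abs ?modz_ge0 ?ltz_mod.
have -> : partial_rate I D R (cyclic_schedule s) l =
          (fun n => (\sum_(t < n) (cyclic_schedule s l t%:Z : nat))%:R / n%:R).
  apply: funext => n; rewrite /partial_rate natr_sum; congr (_ / _).
  by apply: eq_bigr => t _; rewrite block_success.
have -> : (\sum_(A <- s) rowcount A l)%N =
          (\sum_(t < size s * (T + Dc)) (cyclic_schedule s l t%:Z : nat))%N.
  rewrite block_count (big_nth (empty_set T)) big_mkord; apply: eq_bigr => b _.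
  by rewrite modz_nat modn_small.
apply: (@periodic_cvg (fun t => cyclic_schedule s l t%:Z : nat)) => [n|n|].
- exact: leq_b1.
- by rewrite cyclic_schedule_period.
- by rewrite muln_gt0 s_gt0; lia.
Qed.

End Network.

(* Rounding a probability vector [w] down to multiples of [1/N]: each [x] gets
   [quota x = floor (N * w x)] copies in the list [quota_seq], which has at
   most [N] elements and loses less than [1/N] of each weight. *)
Section Quota.
Variables (R : realType) (X : finType) (w : X -> R) (N : nat).

Definition quota (x : X) : nat := Num.truncn (N%:R * w x).

Definition quota_seq : seq X := flatten [seq nseq (quota x) x | x <- index_enum X].

Lemma quota_seq_sum (F : X -> nat) :
  (\sum_(x <- quota_seq) F x = \sum_(x : X) quota x * F x)%N.
Proof.
rewrite big_flatten big_map; apply: eq_bigr => x _.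
by rewrite big_nseq iter_addn_0 mulnC.
Qed.

Lemma mem_quota_seq x : x \in quota_seq -> w x != 0.
Proof.
move=> /flatten_mapP [y _]; rewrite mem_nseq => /andP [quota_gt0 /eqP ->].
by apply: contraTneq quota_gt0 => w0; rewrite /quota w0 mulr0 truncn0.
Qed.

Hypotheses (w_ge0 : forall x, 0 <= w x) (w_sum1 : \sum_(x : X) w x = 1).

Lemma size_quota_seq : (size quota_seq <= N)%N.
Proof.
rewrite size_flatten /shape -map_comp sumnE big_map -(ler_nat R) natr_sum.
apply: le_trans (_ : \sum_(x : X) N%:R * w x <= N%:R).
  by apply: ler_sum => x _; rewrite /= size_nseq truncn_le mulr_ge0.
by rewrite -mulr_sumr w_sum1 mulr1.
Qed.

Lemma quota_err x : (0 < N)%N ->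
  0 <= w x - (quota x)%:R / N%:R /\ w x - (quota x)%:R / N%:R < N%:R^-1.
Proof.
move=> N_gt0; have NR : (0 : R) < N%:R by rewrite ltr0n.
have lo : (quota x)%:R <= N%:R * w x by rewrite truncn_le mulr_ge0.
have hi : N%:R * w x < (quota x).+1%:R by exact: truncnS_gt.
have -> : w x - (quota x)%:R / N%:R = (N%:R * w x - (quota x)%:R) / N%:R.
  by field; rewrite gt_eqF.
split; first by rewrite divr_ge0 ?subr_ge0 // ltW.
rewrite -[X in _ < X]mul1r ltr_pM2r ?invr_gt0 //.
by move: hi; rewrite -natr1; lra.
Qed.

Lemma quota_term_le x (c : R) : (0 < N)%N -> 0 <= c <= 1 ->
  w x * c - (quota x)%:R / N%:R * c <= N%:R^-1.
Proof.
move=> N_gt0 /andP [c_ge0 c_le1]; have [err_ge0 err_lt] := quota_err x N_gt0.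
rewrite -mulrBl -[X in _ <= X]mulr1.
by apply: ler_pM => //; exact: ltW.
Qed.

End Quota.

Lemma prefix_sum_hit (f : nat -> bool) (T k : nat) :
  (k <= \sum_(t < T) (f t : nat))%N ->
  exists2 m, (m <= T)%N & (\sum_(t < m) (f t : nat))%N = k.
Proof.
elim: T k => [|T IH] k.
  by rewrite big_ord0 leqn0 => /eqP ->; exists 0%N => //; rewrite big_ord0.
rewrite big_ord_recr /= => k_le.
have [k_le'|k_gt] := leqP k (\sum_(t < T) (f t : nat))%N.
  by have [m mT sum_m] := IH _ k_le'; exists m => //; apply: leqW.
by exists T.+1 => //; rewrite big_ord_recr /=; move: k_le k_gt; case: (f T) => /=; lia.
Qed.

Lemma prefix_sum_mask (f : nat -> bool) (T m : nat) : (m <= T)%N ->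
  (\sum_(t < T) (f t && (t < m)%N : nat))%N = (\sum_(t < m) (f t : nat))%N.
Proof.
move=> mT; rewrite (big_ord_widen _ (fun t => (f t : nat)) mT) [RHS]big_mkcond /=.
by apply: eq_bigr => t _; case: (f t); case: (t < m)%N.
Qed.

Lemma truncation_approx (R : realType) (a eps : R) (T Dc cn : nat) :
  (0 < T)%N -> 0 <= a -> (cn <= T)%N -> a - cn%:R / T%:R < eps / 2 ->
  (Dc.+1)%:R / T%:R < eps / 2 ->
  `|a - (minn cn (Num.truncn (a * (T + Dc)%N%:R)))%:R / (T + Dc)%N%:R| < eps.
Proof.
move=> T_gt0 a_ge0 cnT a_cn DT.
set n := (T + Dc)%N; set fl := Num.truncn (a * n%:R).
have TR : (0 : R) < T%:R by rewrite ltr0n.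
have nR : (0 : R) < n%:R by rewrite ltr0n /n; lia.
have inv_nT : n%:R^-1 <= T%:R^-1 :> R by rewrite lef_pV2 ?posrE // ler_nat leq_addr.
have DT' : Dc%:R / T%:R + T%:R^-1 < eps / 2 :> R.
  by move: DT; rewrite -natr1 mulrDl mul1r.
rewrite ger0_norm; last first.
  rewrite subr_ge0 ler_pdivrMr //; apply: le_trans (_ : fl%:R <= _).
    by rewrite ler_nat geq_minr.
  by rewrite truncn_le mulr_ge0.
have [cn_fl|fl_cn] := leqP cn fl; last first.
  have : a < fl.+1%:R / n%:R by rewrite ltr_pdivlMr // truncnS_gt.
  rewrite -natr1 mulrDl mul1r.
  have : 0 <= Dc%:R / T%:R :> R by rewrite divr_ge0.
  have : 0 <= T%:R^-1 :> R by rewrite invr_ge0 ltW.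
  lra.
have -> : a - cn%:R / n%:R =
          (a - cn%:R / T%:R) + (cn%:R / n%:R) * (Dc%:R / T%:R) :> R.
  by rewrite /n natrD; field; rewrite -natrD !gt_eqF.
have : cn%:R / n%:R * (Dc%:R / T%:R) <= Dc%:R / T%:R :> R.
  rewrite ler_piMl ?divr_ge0 // ler_pdivrMr // mul1r ler_nat.
  by rewrite (leq_trans cnT) ?leq_addr.
have : 0 <= T%:R^-1 :> R by rewrite invr_ge0 ltW.
lra.
Qed.

Section RateRegion.
Variables (L : finType) (I : L -> {set {set L}}) (D : L -> L -> int) (R : realType).
Local Notation Dc := (character I D).

Lemma scale_apply (c : R) (x : L -> R) l : (c *: x) l = c * x l.
Proof. by []. Qed.

Lemma scaled_mrate T (A : bmatrix L T) l : (0 < T)%N ->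
  T%:R / (T + Dc)%:R * mrate R A l = (rowcount A l)%:R / (T + Dc)%:R.
Proof.
move=> T_gt0; rewrite /mrate -/(rowcount A l).
by field; rewrite -natrD !pnatr_eq0 -!lt0n //; lia.
Qed.

(* Inner bound: a point of the scaled convex hull is achieved, up to any
   [eps], by cyclically playing its independent sets in proportion to their
   weights rounded down to multiples of [1/N], each in its own block. *)
Lemma scaled_conv_rates_achievable T (y : L -> R) : (0 < T)%N ->
  scaled_conv_rates I D T y -> achievable I D y.
Proof.
move=> T_gt0 [x [w [w_ge0 [w_ind [w_sum1 xE]]]] <-] eps eps_gt0.
pose K := (\sum_(A : bmatrix L T) 1)%N.
pose N := (Num.truncn (K%:R / eps)).+1.
have NR : (0 : R) < N%:R by rewrite ltr0n.
have gR : (0 : R) < (T + Dc)%:R by rewrite ltr0n; lia.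
pose s := quota_seq w N ++ nseq (N - size (quota_seq w N)) (empty_set L T).
have size_s : size s = N by rewrite size_cat size_nseq subnKC // size_quota_seq.
have s_ind : all (@independent L I D T) s.
  apply/allP => A; rewrite mem_cat => /orP [/mem_quota_seq wA|/nseqP [-> _]].
    by apply: contraR wA => /w_ind ->.
  exact: empty_set_independent.
exists (cyclic_schedule I D s); eexists; split.
  by apply: cyclic_schedule_rate; rewrite // size_s.
move=> l /=; rewrite size_s big_cat big_nseq /= rowcount_empty_set.
rewrite iter_addn_0 mul0n addn0 quota_seq_sum natr_sum mulr_suml.
rewrite scale_apply xE mulr_sumr; under eq_bigr do rewrite mulrCA scaled_mrate //.
have K_lt : K%:R / N%:R < eps.
  by rewrite ltr_pdivrMr // mulrC -ltr_pdivrMr //; exact: truncnS_gt.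
suff : \sum_(A : bmatrix L T) (w A * ((rowcount A l)%:R / (T + Dc)%:R) -
         (quota w N A * rowcount A l)%:R / (N * (T + Dc))%:R) <= K%:R / N%:R.
  by rewrite sumrB; lra.
have -> : K%:R / N%:R = \sum_(A : bmatrix L T) N%:R^-1 :> R.
  by rewrite natr_sum mulr_suml; apply: eq_bigr => A _; rewrite mul1r.
apply: ler_sum => A _.
have -> : (quota w N A * rowcount A l)%N%:R / (N * (T + Dc))%N%:R =
          (quota w N A)%:R / N%:R * ((rowcount A l)%:R / (T + Dc)%:R) :> R.
  by rewrite !natrM; field; rewrite -natrD !gt_eqF.
apply: quota_term_le => //; rewrite divr_ge0 //= ler_pdivrMr // mul1r ler_nat.
by rewrite (leq_trans (rowcount_le A l)) ?leq_addr.
Qed.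

Lemma scaled_conv_rates_ge0 T (y : L -> R) :
  scaled_conv_rates I D T y -> forall l, 0 <= y l.
Proof.
move=> [x [w [w_ge0 [_ [_ xE]]]] <-] l.
rewrite scale_apply xE mulr_ge0 ?divr_ge0 ?sumr_ge0 // => A _.
by rewrite mulr_ge0 ?divr_ge0.
Qed.

Lemma conv_rates_vertex T (A : bmatrix L T) :
  independent I D A -> conv_rates I D T (mrate R A).
Proof.
move=> A_ind; exists (fun B => (B == A)%:R).
have delta (F : bmatrix L T -> R) : \sum_B (B == A)%:R * F B = F A.
  by rewrite (bigD1 A) //= eqxx mul1r big1 ?addr0 // => B /negbTE ->; rewrite mul0r.
split; first by move=> B; rewrite ler0n.
split; first by move=> B; case: eqP => // ->; rewrite A_ind.
split; last by move=> l; rewrite delta.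
by have := delta (fun=> 1); under eq_bigr do rewrite mulr1.
Qed.

Lemma indep_of_success T (S : schedule L) (A : bmatrix L T) :
  (forall l t, A (l, t) -> success I D S l (t : nat)%:Z) -> independent I D A.
Proof.
move=> A_succ; apply/negP.
move=> /existsP [l /existsP [t /existsP [phi /andP [phi_in /andP [Alt /forallP coll]]]]].
move: (A_succ _ _ Alt) => /andP [_ /negP]; apply.
apply/existsP; exists phi; rewrite phi_in; apply/forallP => l'; apply/implyP => l'_in.
move: (coll l'); rewrite l'_in => /entry_atP [t' -> At'].
by move: (A_succ _ _ At') => /andP [].
Qed.

(* Keeping a prefix of the successes of each link during the first [T] slots
   realises any prescribed number of ones per row by an independent set. *)
Lemma success_submatrix (S : schedule L) T (k : L -> nat) :
  (forall l, k l <= \sum_(t < T) success I D S l t%:Z)%N ->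
  exists2 A : bmatrix L T, independent I D A & forall l, rowcount A l = k l.
Proof.
move=> k_le; pose f l t := success I D S l t%:Z.
have /choice [m mP] : forall l, exists m,
    (m <= T)%N /\ (\sum_(t < m) (f l t : nat))%N = k l.
  by move=> l; have [m mT sum_m] := prefix_sum_hit (f := f l) (k_le l); exists m.
exists [ffun p : L * 'I_T => f p.1 p.2 && (p.2 < m p.1)%N].
  by apply: (@indep_of_success T S) => l t; rewrite ffunE => /andP [succ _].
move=> l; rewrite /rowcount; under eq_bigr do rewrite ffunE /=.
by rewrite prefix_sum_mask ?(mP l).1 ?(mP l).2.
Qed.

(* Run an almost optimal schedule for [T] slots and keep,
   on each link, no more successes than the target rate allows. *)
Lemma rate_region_approx (x : L -> R) eps : rate_region I D x -> 0 < eps ->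
  exists2 T, (1 <= T)%N &
    exists2 y, scaled_conv_rates I D T y & forall l, `|x l - y l| < eps.
Proof.
move=> [x_ge0 x_ach] eps_gt0.
have e4 : 0 < eps / 4 by rewrite divr_gt0.
have [S [r [S_rate x_r]]] := x_ach _ e4.
have close : \forall T \near \oo,
    forall l, `|r l - partial_rate I D R S l T| < eps / 4.
  apply: filter_forall => l; exact: (cvgrPdist_lt _ _).1 (S_rate l) _ e4.
have [T [T_close T_big]] :=
  filter_ex (filterI close (nbhs_infty_gtr ((Dc.+1)%:R * 2 / eps))).
have T_pos : (0 : R) < T%:R by apply: lt_trans T_big; rewrite divr_gt0.
have T_gt0 : (0 < T)%N by rewrite -(ltr_nat R).
have DT : (Dc.+1)%:R / T%:R < eps / 2.
  by rewrite ltr_pdivrMr // mulrC -ltr_pdivrMr ?divr_gt0 // invf_div mulrA.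
pose cn l := (\sum_(t < T) success I D S l t%:Z)%N.
pose k l := minn (cn l) (Num.truncn (x l * (T + Dc)%N%:R)).
have [A A_ind A_row] := @success_submatrix S T k (fun l => geq_minl _ _).
exists T => //; exists (T%:R / (T + Dc)%:R *: mrate R A).
  by exists (mrate R A) => //; exact: conv_rates_vertex.
move=> l; rewrite scale_apply scaled_mrate // A_row.
apply: (@truncation_approx R _ _ T Dc (cn l)) => //.
  exact: (@sum_le1 (fun t => success I D S l t%:Z : nat) (fun t => leq_b1 _)).
have := T_close l; have := x_r l; rewrite /partial_rate -natr_sum -/(cn l).
by rewrite ltr_norml => + /andP [lo hi]; lra.
Qed.

Lemma rate_region_closed (x : L -> R) :
  (forall eps, 0 < eps ->
     exists2 y, rate_region I D y & forall l, `|x l - y l| < eps) ->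
  rate_region I D x.
Proof.
move=> approx; split.
  move=> l; rewrite leNgt; apply/negP => x_neg.
  have [y [y_ge0 _] xy] := approx (- x l) (etrans (oppr_gt0 _) x_neg).
  by have := xy l; have := y_ge0 l; rewrite ltr_norml; lra.
move=> eps eps_gt0; have e2 : 0 < eps / 2 by rewrite divr_gt0.
have [y [_ y_ach] xy] := approx _ e2; have [S [r [S_rate y_r]]] := y_ach _ e2.
by exists S, r; split => // l; have := xy l; have := y_r l; rewrite ltr_norml; lra.
Qed.

End RateRegion.

Theorem theorem2 (R : realType) (L : finType) (I : L -> {set {set L}})
    (D : L -> L -> int)
    (hL : (0 < #|L|)%N)
    (hI : forall l (phi : {set L}), phi \in I l -> phi != finset.set0) :
  @rate_region L I D R =
  closure ((\bigcup_(T in [set n : nat | (1 <= n)%N]) @scaled_conv_rates L I D R T)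
             : set {ptws L -> R}).
Proof.
apply/seteqP; split => x.
  move=> x_in; apply/closure_ptwsP => eps eps_gt0.
  have [T T_ge1 [y y_in xy]] := rate_region_approx x_in eps_gt0.
  by exists y; split => //; exists T.
move=> /closure_ptwsP x_cl; apply: rate_region_closed => eps eps_gt0.
have [y [[T T_ge1 y_in] xy]] := x_cl _ eps_gt0.
exists y => //; split; first exact: scaled_conv_rates_ge0 y_in.
exact: scaled_conv_rates_achievable T_ge1 y_in.
Qed.
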